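(* Let $p$ be an odd prime and $\alpha$ an integer with $1\le\alpha<p$. Let $a,b,c$ be non-zero integers with $\gcd(a,b,c)=1$ satisfying $a^p+2^\alpha b^p+c^p=0$ and normalized so that $a\equiv -1 \pmod 4$. Put $A=a^p$, $B=2^\alpha b^p$, and let $E$ be the elliptic curve over $\mathbb{Q}$ given by $y^2=x(x-A)(x+B)$, with conductor $N_E$. Then $N_E$ is a power of $2$ if and only if $(a,b,c)=(-1,1,-1)$.
   Context: Since $\gcd(a,b,c)=1$, $a$ and $c$ are odd, so the normalization $a\equiv-1\pmod 4$ can always be achieved by replacing $(a,b,c)$ by $(-a,-b,-c)$. $N_E$ denotes the (arithmetic) conductor of the elliptic curve $E$ over $\mathbb{Q}$. *)

From mathcomp Require Import all_boot all_order all_algebra.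
Set Implicit Arguments. Unset Strict Implicit. Unset Printing Implicit Defensive.
Import Order.TTheory GRing.Theory Num.Theory.
Local Open Scope ring_scope.

(* General Weierstrass equation over Q:
   y^2 + a1 x y + a3 y = x^3 + a2 x^2 + a4 x + a6. *)
Record weierstrass := Weierstrass { wa1 : rat; wa2 : rat; wa3 : rat; wa4 : rat; wa6 : rat }.

Definition wb2 (W : weierstrass) := wa1 W ^+ 2 + 4 * wa2 W.
Definition wb4 (W : weierstrass) := 2 * wa4 W + wa1 W * wa3 W.
Definition wb6 (W : weierstrass) := wa3 W ^+ 2 + 4 * wa6 W.
Definition wb8 (W : weierstrass) :=
  wa1 W ^+ 2 * wa6 W + 4 * wa2 W * wa6 W - wa1 W * wa3 W * wa4 W
  + wa2 W * wa3 W ^+ 2 - wa4 W ^+ 2.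
Definition wdisc (W : weierstrass) :=
  - wb2 W ^+ 2 * wb8 W - 8 * wb4 W ^+ 3 - 27 * wb6 W ^+ 2
  + 9 * wb2 W * wb4 W * wb6 W.

Definition is_elliptic (W : weierstrass) := wdisc W != 0.

(* The Weierstrass model obtained by the admissible change of variables
   x = u^2 x' + r,  y = u^3 y' + s u^2 x' + t  (u <> 0). *)
Definition wchange (W : weierstrass) (u r s t : rat) : weierstrass :=
  let a1 := wa1 W in let a2 := wa2 W in let a3 := wa3 W in
  let a4 := wa4 W in let a6 := wa6 W in
  Weierstrass ((a1 + 2 * s) / u)
              ((a2 - s * a1 + 3 * r - s ^+ 2) / u ^+ 2)
              ((a3 + r * a1 + 2 * t) / u ^+ 3)
              ((a4 - s * a3 + 2 * r * a2 - (t + r * s) * a1 + 3 * r ^+ 2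
                - 2 * s * t) / u ^+ 4)
              ((a6 + r * a4 + r ^+ 2 * a2 + r ^+ 3 - t * a3 - t ^+ 2
                - r * t * a1) / u ^+ 6).

Definition l_integral (l : nat) (q : rat) := ~~ (l%:Z %| denq q)%Z.
Definition l_unit (l : nat) (q : rat) := l_integral l q && ~~ (l%:Z %| numq q)%Z.

Definition good_reduction (W : weierstrass) (l : nat) :=
  exists u r s t : rat, u != 0 /\
    let W' := wchange W u r s t in
    [&& l_integral l (wa1 W'), l_integral l (wa2 W'), l_integral l (wa3 W'),
        l_integral l (wa4 W'), l_integral l (wa6 W') & l_unit l (wdisc W')].

(* The conductor N_E = prod_l l^{f_l} with f_l = 0 iff E has good reduction
   at l.  Hence "N_E is a power of 2" means f_l = 0 for every odd prime l. *)
Definition conductor_is_power_of_2 (W : weierstrass) :=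
  forall l : nat, prime l -> odd l -> good_reduction W l.

(* The Frey-type curve y^2 = x(x - A)(x + B) = x^3 + (B - A) x^2 - A B x. *)
Definition frey_curve (A B : rat) : weierstrass :=
  Weierstrass 0 (B - A) 0 (- (A * B)) 0.

From mathcomp Require Import all_boot all_order all_algebra.
From mathcomp Require Import zify ring.
Set Implicit Arguments. Unset Strict Implicit. Unset Printing Implicit Defensive.
Import Order.TTheory GRing.Theory Num.Theory.
Local Open Scope ring_scope.

(* For the Frey curve y^2 = x(x - A)(x + B) one has c4 = 16(A^2 + AB + B^2)
   and discriminant 16(AB(A + B))^2.  Since c4 and the discriminant scale by
   u^4 and u^12 under a change of variables, an odd prime l dividing the
   discriminant but not c4 divides the discriminant of every l-integral
   model, so the reduction at l is bad.  With A = a^p, B = 2^alpha b^p and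
   A + B = -c^p, coprimality of a, b, c makes this happen exactly for the odd
   primes dividing abc; at the other odd primes the given model is already
   good.  So N_E is a power of 2 iff abc has no odd prime factor, and the
   equation with a = -1 (mod 4) then leaves only (-1, 1, -1). *)

Section LocalIntegrality.

Variable l : nat.
Hypothesis l_prime : prime l.

Lemma prime_dvdzM (x y : int) :
  (l%:Z %| x * y)%Z = (l%:Z %| x)%Z || (l%:Z %| y)%Z.
Proof. by rewrite !dvdzE abszM Euclid_dvdM. Qed.

Lemma prime_dvdzX (x : int) k : (0 < k)%N ->
  (l%:Z %| x ^+ k)%Z = (l%:Z %| x)%Z.
Proof. by move=> k_gt0; rewrite !dvdzE abszX Euclid_dvdX // k_gt0 andbT. Qed.

Lemma prime_ndvdz1 : ~~ (l%:Z %| 1)%Z.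
Proof. by apply: contraTN l_prime; rewrite dvdz1 /= => /eqP ->. Qed.

Lemma odd_prime_ndvdz_pow2 k : odd l -> ~~ (l%:Z %| 2 ^+ k)%Z.
Proof.
move=> l_odd; case: k => [|k]; first exact: prime_ndvdz1.
rewrite prime_dvdzX // dvdzE /= dvdn_prime2 //.
by apply: contraTN l_odd => /eqP ->.
Qed.

Lemma ndvdz_denq (q : rat) : (l%:Z %| numq q)%Z -> ~~ (l%:Z %| denq q)%Z.
Proof.
move=> l_num; apply/negP => l_den; move: prime_ndvdz1.
rewrite dvdzE /= -(eqP (coprime_num_den q)) dvdn_gcd.
by move: l_num l_den; rewrite !dvdzE /= => -> ->.
Qed.

Lemma l_integralP (q : rat) :
  l_integral l q <-> exists x y : int, ~~ (l%:Z %| y)%Z /\ q * y%:~R = x%:~R.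
Proof.
split=> [q_int | [x [y [l_y qyx]]]].
  by exists (numq q), (denq q); rewrite numqE.
apply/negP => l_den.
have e : numq q * y = x * denq q.
  by apply: (@intr_inj rat); rewrite !intrM numqE -qyx; ring.
have : (l%:Z %| numq q * y)%Z by rewrite e dvdz_mull.
by rewrite prime_dvdzM (negPf l_y) orbF => /ndvdz_denq; rewrite l_den.
Qed.

Lemma l_integral_int (k : int) : l_integral l k%:~R.
Proof. by rewrite /l_integral denq_int prime_ndvdz1. Qed.

Lemma l_integral1 : l_integral l 1.
Proof. exact: (l_integral_int 1). Qed.

Lemma l_unit_int (k : int) : l_unit l k%:~R = ~~ (l%:Z %| k)%Z.
Proof. by rewrite /l_unit l_integral_int numq_int. Qed.

Lemma l_integralN q : l_integral l q -> l_integral l (- q).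
Proof. by rewrite /l_integral denqN. Qed.

Lemma l_integralD q1 q2 :
  l_integral l q1 -> l_integral l q2 -> l_integral l (q1 + q2).
Proof.
move=> /l_integralP [x1 [y1 [l_y1 e1]]] /l_integralP [x2 [y2 [l_y2 e2]]].
apply/l_integralP; exists (x1 * y2 + x2 * y1), (y1 * y2).
by rewrite prime_dvdzM negb_or l_y1 l_y2 intrD !intrM -e1 -e2; split=> //; ring.
Qed.

Lemma l_integralM q1 q2 :
  l_integral l q1 -> l_integral l q2 -> l_integral l (q1 * q2).
Proof.
move=> /l_integralP [x1 [y1 [l_y1 e1]]] /l_integralP [x2 [y2 [l_y2 e2]]].
apply/l_integralP; exists (x1 * x2), (y1 * y2).
by rewrite prime_dvdzM negb_or l_y1 l_y2 !intrM -e1 -e2; split=> //; ring.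
Qed.

Lemma l_integralX q k : l_integral l q -> l_integral l (q ^+ k).
Proof.
move=> q_int; elim: k => [|k IHk]; first exact: l_integral1.
by rewrite exprS l_integralM.
Qed.

Lemma l_integral_unitV q : l_unit l q -> l_integral l q^-1.
Proof.
case/andP=> _ l_num; apply/l_integralP; exists (denq q), (numq q); split=> //.
have q_neq0 : q != 0 by apply: contraNneq l_num => ->; exact: dvdz0.
by rewrite numqE mulrA mulVf ?mul1r.
Qed.

Lemma l_integral_of_expr q k :
  (0 < k)%N -> l_integral l (q ^+ k) -> l_integral l q.
Proof.
move=> k_gt0 /l_integralP [x [y [l_y e]]]; apply/negP => l_den.
have e' : numq q ^+ k * y = x * denq q ^+ k.
  by apply: (@intr_inj rat); rewrite !(intrM, rmorphXn) /= numqE exprMn -e; ring.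
have : (l%:Z %| numq q ^+ k * y)%Z by rewrite e' dvdz_mull // dvdz_exp.
rewrite prime_dvdzM prime_dvdzX // (negPf l_y) orbF => /ndvdz_denq.
by rewrite l_den.
Qed.

Lemma dvdz_numqM q1 q2 : (l%:Z %| numq q1)%Z -> l_integral l q2 ->
  (l%:Z %| numq (q1 * q2))%Z.
Proof.
move=> l_num1 l_den2.
have e : numq (q1 * q2) * (denq q1 * denq q2)
         = numq q1 * numq q2 * denq (q1 * q2).
  by apply: (@intr_inj rat); rewrite !intrM !numqE; ring.
have : (l%:Z %| numq (q1 * q2) * (denq q1 * denq q2))%Z.
  by rewrite e !dvdz_mulr.
by rewrite !prime_dvdzM (negPf (ndvdz_denq l_num1)) (negPf l_den2) !orbF.
Qed.

End LocalIntegrality.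

Definition c4 (W : weierstrass) := wb2 W ^+ 2 - 24 * wb4 W.

Lemma c4_wchange W u r s t : u != 0 -> c4 (wchange W u r s t) * u ^+ 4 = c4 W.
Proof. by move=> u_neq0; rewrite /c4 /wb2 /wb4 /=; field. Qed.

Lemma wdisc_wchange W u r s t : u != 0 ->
  wdisc (wchange W u r s t) * u ^+ 12 = wdisc W.
Proof. by move=> u_neq0; rewrite /wdisc /wb2 /wb4 /wb6 /wb8 /=; field. Qed.

Lemma wchange_id W : wchange W 1 0 0 0 = W.
Proof.
by case: W => a1 a2 a3 a4 a6; rewrite /wchange /=; congr Weierstrass; field.
Qed.

Lemma l_integral_c4 l W : prime l ->
  l_integral l (wa1 W) -> l_integral l (wa2 W) -> l_integral l (wa3 W) ->
  l_integral l (wa4 W) -> l_integral l (c4 W).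
Proof.
move=> l_prime a1_int a2_int a3_int a4_int.
by rewrite /c4 /wb2 /wb4
  !(l_integralD, l_integralM, l_integralN, l_integralX, l_integral1).
Qed.

Lemma good_reduction_of_integral l W :
  [&& l_integral l (wa1 W), l_integral l (wa2 W), l_integral l (wa3 W),
      l_integral l (wa4 W), l_integral l (wa6 W) & l_unit l (wdisc W)] ->
  good_reduction W l.
Proof.
by exists 1, 0, 0, 0; rewrite wchange_id; split; first exact: oner_neq0.
Qed.

Theorem bad_reduction_of_c4_unit l W : prime l ->
  l_unit l (c4 W) -> (l%:Z %| numq (wdisc W))%Z -> ~ good_reduction W l.
Proof.
move=> l_prime c4_unit l_disc [u [r [s [t [u_neq0]]]]].
set W' := wchange W u r s t => /and5P [a1_int a2_int a3_int a4_int /and3P [_ _]].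
apply/negP; rewrite negbK.
have c4_neq0 : c4 W' != 0.
  apply: contraTneq c4_unit => c4_eq0.
  by rewrite -(c4_wchange W r s t u_neq0) -/W' c4_eq0 mul0r /l_unit dvdz0 andbF.
have uV_int : l_integral l u^-1.
  apply: (l_integral_of_expr l_prime (k := 4)) => //.
  have -> : u^-1 ^+ 4 = c4 W' * (c4 W)^-1.
    by rewrite -(c4_wchange W r s t u_neq0) -/W'; field; rewrite u_neq0.
  by apply: l_integralM => //; [apply: l_integral_c4 | apply: l_integral_unitV].
have -> : wdisc W' = wdisc W * u^-1 ^+ 12.
  by rewrite -(wdisc_wchange W r s t u_neq0) -/W'; field.
by apply: dvdz_numqM => //; apply: l_integralX.
Qed.

Lemma c4_frey (A B : int) :
  c4 (frey_curve A%:~R B%:~R) = (2 ^+ 4 * (A ^+ 2 + A * B + B ^+ 2))%:~R.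
Proof. by rewrite /c4 /wb2 /wb4 /= !(intrM, intrD, rmorphXn); ring. Qed.

Lemma wdisc_frey (A B : int) :
  wdisc (frey_curve A%:~R B%:~R) = (2 ^+ 4 * (A * B * (A + B)) ^+ 2)%:~R.
Proof.
by rewrite /wdisc /wb2 /wb4 /wb6 /wb8 /= !(intrM, intrD, rmorphXn); ring.
Qed.

Lemma prime_dvdz_of_norm_form l (A B : int) : prime l ->
  (l%:Z %| A * B * (A + B))%Z -> (l%:Z %| A ^+ 2 + A * B + B ^+ 2)%Z ->
  (l%:Z %| A)%Z && (l%:Z %| B)%Z.
Proof.
move=> l_prime l_disc l_N.
have l_B_of_A : (l%:Z %| A)%Z -> (l%:Z %| B)%Z.
  move=> l_A; rewrite -(prime_dvdzX l_prime _ (isT : 0 < 2)%N).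
  have -> : B ^+ 2 = (A ^+ 2 + A * B + B ^+ 2) - A * (A + B) by ring.
  by rewrite rpredB // dvdz_mulr.
have l_A_of_B : (l%:Z %| B)%Z -> (l%:Z %| A)%Z.
  move=> l_B; rewrite -(prime_dvdzX l_prime _ (isT : 0 < 2)%N).
  have -> : A ^+ 2 = (A ^+ 2 + A * B + B ^+ 2) - B * (A + B) by ring.
  by rewrite rpredB // dvdz_mulr.
suff : (l%:Z %| A * B)%Z.
  by rewrite prime_dvdzM // => /orP [l_A | l_B];
    [rewrite l_A l_B_of_A | rewrite l_B l_A_of_B].
move: l_disc; rewrite prime_dvdzM // => /orP [// | l_AB].
have -> : A * B = (A + B) ^+ 2 - (A ^+ 2 + A * B + B ^+ 2) by ring.
by rewrite rpredB // dvdz_exp.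
Qed.

Lemma frey_bad_reduction l (A B : int) : prime l -> odd l ->
  (l%:Z %| A * B * (A + B))%Z -> ~~ ((l%:Z %| A)%Z && (l%:Z %| B)%Z) ->
  ~ good_reduction (frey_curve A%:~R B%:~R) l.
Proof.
move=> l_prime l_odd l_disc l_AB; apply: bad_reduction_of_c4_unit => //.
  rewrite c4_frey l_unit_int // prime_dvdzM // negb_or odd_prime_ndvdz_pow2 //=.
  exact: contra (prime_dvdz_of_norm_form l_prime l_disc) l_AB.
by rewrite wdisc_frey numq_int dvdz_mull // dvdz_exp.
Qed.

Lemma frey_good_reduction l (A B : int) : prime l ->
  ~~ (l%:Z %| 2 ^+ 4 * (A * B * (A + B)) ^+ 2)%Z ->
  good_reduction (frey_curve A%:~R B%:~R) l.
Proof.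
move=> l_prime l_disc; apply: good_reduction_of_integral.
rewrite wdisc_frey /= l_unit_int // l_disc.
rewrite -intrB -intrM -intrN !l_integral_int //.
by rewrite -[0]/(0%:~R) l_integral_int.
Qed.

Lemma frey_good_reduction_iff p alpha (a b c : int) l : (0 < p)%N ->
  gcdz (gcdz a b) c = 1%N -> a ^+ p + 2 ^+ alpha * b ^+ p + c ^+ p = 0 ->
  prime l -> odd l ->
  good_reduction (frey_curve (a ^+ p)%:~R (2 ^+ alpha * b ^+ p)%:~R) l
  <-> ~~ (l%:Z %| a * b * c)%Z.
Proof.
move=> p_gt0 abc_coprime abc_eq l_prime l_odd.
have l_pow2 k := negPf (odd_prime_ndvdz_pow2 l_prime k l_odd).
have l_pow := prime_dvdzX l_prime _ p_gt0.
set A := a ^+ p; set B := 2 ^+ alpha * b ^+ p.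
have AB_eq : A + B = - c ^+ p by apply/eqP; rewrite -addr_eq0 abc_eq.
have l_B : (l%:Z %| B)%Z = (l%:Z %| b)%Z by rewrite prime_dvdzM // l_pow2 l_pow.
have l_disc : (l%:Z %| A * B * (A + B))%Z = (l%:Z %| a * b * c)%Z.
  by rewrite AB_eq mulrN rpredN !prime_dvdzM // l_pow2 /= !l_pow.
split=> [good | l_abc]; last first.
  apply: frey_good_reduction => //.
  by rewrite prime_dvdzM // l_pow2 prime_dvdzX // l_disc.
apply/negP => l_abc; apply: frey_bad_reduction good; rewrite ?l_disc //.
apply/negP => /andP [l_A]; rewrite l_B => l_b.
have l_a : (l%:Z %| a)%Z by rewrite -l_pow.
have l_c : (l%:Z %| c)%Z.
  have c_eq : c ^+ p = - (A + B) by rewrite AB_eq opprK.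
  by rewrite -l_pow c_eq rpredN rpredD // l_B.
have := prime_ndvdz1 l_prime; rewrite -abc_coprime.
by rewrite !dvdz_gcd l_a l_b l_c.
Qed.

Lemma abs_eq1_of_odd_prime_free (z : int) : ~~ (2%:Z %| z)%Z ->
  (forall l, prime l -> odd l -> ~~ (l%:Z %| z)%Z) -> `|z|%N = 1.
Proof.
move=> z_odd no_odd_prime; case: (ltngtP `|z|%N 1) => // [z_lt1 | z_gt1].
  by move: z_odd; have -> : z = 0 by lia.
have pdiv_z : (pdiv `|z| %| `|z|)%N := pdiv_dvd _.
have [pdiv_eq2 | pdiv_odd] := even_prime (pdiv_prime z_gt1).
  by move: z_odd; rewrite dvdzE /= -pdiv_eq2 pdiv_z.
by move: (no_odd_prime _ (pdiv_prime z_gt1) pdiv_odd); rewrite dvdzE /= pdiv_z.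
Qed.

Lemma odd_expr_unit p (x : int) : odd p -> `|x|%N = 1 -> x ^+ p = x.
Proof.
move=> p_odd x_unit; have [-> | ->] : x = 1 \/ x = -1 by lia.
  by rewrite expr1n.
by rewrite -signr_odd p_odd expr1.
Qed.

Lemma odd_prime_free_solution p alpha (a b c : int) : odd p -> (1 <= alpha)%N ->
  b != 0 -> a ^+ p + 2 ^+ alpha * b ^+ p + c ^+ p = 0 -> (a = -1 %[mod 4])%Z ->
  (forall l, prime l -> odd l -> ~~ (l%:Z %| a * b * c)%Z) ->
  (a, b, c) = (-1, 1, -1).
Proof.
move=> p_odd alpha_ge1 b_neq0 abc_eq a_mod4 no_odd_prime.
have p_gt0 := odd_gt0 p_odd.
have a_odd : ~~ (2%:Z %| a)%Z by apply/negP => ?; lia.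
have c_odd : ~~ (2%:Z %| c)%Z.
  apply: contra a_odd => c_even; rewrite -(prime_dvdzX (isT : prime 2) _ p_gt0).
  have -> : a ^+ p = - (2 ^+ alpha * b ^+ p) - c ^+ p.
    by apply/eqP; rewrite -subr_eq0 -abc_eq; apply/eqP; ring.
  by rewrite rpredB ?rpredN ?dvdz_mulr ?dvdz_exp // (dvdz_exp _ (dvdzz 2)).
have a_unit : `|a|%N = 1.
  apply: abs_eq1_of_odd_prime_free => // l l_prime l_odd.
  apply: contra (no_odd_prime l l_prime l_odd).
  by rewrite -mulrA; apply: dvdz_mulr.
have c_unit : `|c|%N = 1.
  apply: abs_eq1_of_odd_prime_free => // l l_prime l_odd.
  by apply: contra (no_odd_prime l l_prime l_odd); apply: dvdz_mull.
move: abc_eq; rewrite !(odd_expr_unit p_odd a_unit, odd_expr_unit p_odd c_unit).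
have -> : a = -1 by lia.
have [-> | ->] : c = 1 \/ c = -1 by lia.
  move=> abc_eq; have : 2 ^+ alpha * b ^+ p = 0 by lia.
  by move/eqP; rewrite mulf_eq0 !expf_eq0 (negPf b_neq0) andbF orbF => /andP [].
move=> abc_eq; have pow2_ge2 : 2 <= 2 ^+ alpha :> int.
  case: alpha alpha_ge1 {abc_eq} => // k _.
  by rewrite exprS ler_peMr // exprn_ege1.
have bp_eq1 : b ^+ p = 1 by nia.
have b_unit : `|b|%N = 1.
  have : `|b| ^+ p == 1 by rewrite -normrX bp_eq1 normr1.
  by rewrite pexpr_eq1 // => /eqP; lia.
by rewrite (odd_expr_unit p_odd b_unit) in bp_eq1; rewrite bp_eq1.
Qed.

Theorem mainTheorem3 (p alpha : nat) (a b c : int) :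
  prime p -> odd p ->
  (1 <= alpha < p)%N ->
  a != 0 -> b != 0 -> c != 0 ->
  gcdz (gcdz a b) c = 1%N ->
  a ^+ p + 2 ^+ alpha * b ^+ p + c ^+ p = 0 ->
  (a = -1 %[mod 4])%Z ->
  conductor_is_power_of_2
    (frey_curve ((a ^+ p)%:~R) ((2 ^+ alpha * b ^+ p)%:~R))
  <-> (a, b, c) = (-1, 1, -1).
Proof.
move=> _ p_odd /andP [alpha_ge1 _] _ b_neq0 _ abc_coprime abc_eq a_mod4.
have good_iff l (l_prime : prime l) (l_odd : odd l) :=
  frey_good_reduction_iff (odd_gt0 p_odd) abc_coprime abc_eq l_prime l_odd.
split=> [conductor | abc_def l l_prime l_odd].
  apply: (odd_prime_free_solution p_odd alpha_ge1 b_neq0 abc_eq a_mod4).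
  by move=> l l_prime l_odd; apply/good_iff/conductor.
apply/good_iff => //.
by case: abc_def => -> -> ->; rewrite mulrNN !mulr1 prime_ndvdz1.
Qed.
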